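(* Consider the multi-resource General Lotto game with the weighted-contribution winning rule $W_{\mathrm{WC}}$ with weights $\boldsymbol a,\boldsymbol b\in\mathbb R^T_{\ge0}$, budgets $\boldsymbol X,\boldsymbol Y\in\mathbb R^T_{\ge0}$ with $\sum_t a_tX_t>0$, and contest values $\boldsymbol v$. Let $\beta=\frac{\sum_{t}b_tY_t}{\sum_t a_tX_t}$. Then the game has an equilibrium, and in every equilibrium the payoff to player $\mathcal X$ is $L(\beta)$ and the payoff to player $\mathcal Y$ is $1-L(\beta)$.
   Context: Contests $\mathcal C=\{1,\dots,C\}$ with values $v_c>0$, $\sum_cv_c=1$; resource types $\mathcal T=\{1,\dots,T\}$. Pure allocations $\mathbf x=(\boldsymbol x_1,\dots,\boldsymbol x_C)\in\mathbb R_{\ge0}^{CT}$, $\boldsymbol x_c=(x_{c,1},\dots,x_{c,T})$, and similarly $\mathbf y$. Strategy set $\mathbb F(\boldsymbol X)$: probability distributions $F$ on $\mathbb R^{CT}_{\ge0}$ with $\mathbb E_{\mathbf x\sim F}[\sum_cx_{c,t}]\le X_t$ for each $t$; similarly $\mathbb F(\boldsymbol Y)$. Winning rule $W_{\mathrm{WC}}(\boldsymbol x,\boldsymbol y)=1$ if $\sum_ta_tx_t\ge\sum_tb_ty_t$, else $0$. Payoffs $\pi_{\mathcal X}(F_{\mathcal X},F_{\mathcal Y})=\mathbb E[\sum_cv_cW_{\mathrm{WC}}(\boldsymbol x_c,\boldsymbol y_c)]$ with $\mathbf x\sim F_{\mathcal X}$, $\mathbf y\sim F_{\mathcal Y}$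 independent, and $\pi_{\mathcal Y}=1-\pi_{\mathcal X}$. Equilibrium: $(F^*_{\mathcal X},F^*_{\mathcal Y})$ with $\pi_{\mathcal X}(F_{\mathcal X},F^*_{\mathcal Y})\le\pi_{\mathcal X}(F^*_{\mathcal X},F^*_{\mathcal Y})\le\pi_{\mathcal X}(F^*_{\mathcal X},F_{\mathcal Y})$ for all admissible $F_{\mathcal X},F_{\mathcal Y}$. $L(\alpha)=1-\alpha/2$ for $\alpha\le1$ and $L(\alpha)=1/(2\alpha)$ for $\alpha>1$. *)

From HB Require Import structures.
From mathcomp Require Import all_boot all_order all_algebra.
From mathcomp Require Import all_classical all_reals all_analysis.
Set Implicit Arguments. Unset Strict Implicit. Unset Printing Implicit Defensive.
Import Order.TTheory GRing.Theory Num.Theory.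
Local Open Scope classical_set_scope.
Local Open Scope ring_scope.

Section GeneralLotto.
Variables (R : realType) (C T : nat).

(* A pure allocation: for every contest c, a vector of T resource amounts.
   x : C.-tuple (T.-tuple R), x_{c,t} = tnth (tnth x c) t. *)
Definition alloc := C.-tuple (T.-tuple R).

Definition W_WC (a b : 'I_T -> R) (xc yc : T.-tuple R) : R :=
  if \sum_(t < T) b t * tnth yc t <= \sum_(t < T) a t * tnth xc t then 1 else 0.

Definition admissible (X : 'I_T -> R) (F : probability alloc R) : Prop :=
  F [set x : alloc | forall c t, 0 <= tnth (tnth x c) t] = 1%E /\
  forall t : 'I_T,
    (\int[F]_x (\sum_(c < C) tnth (tnth x c) t)%:E <= (X t)%:E)%E.

Definition payoffX (v : 'I_C -> R) (a b : 'I_T -> R)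
  (FX FY : probability alloc R) : \bar R :=
  (\int[product_measure1 FX FY]_z
     (\sum_(c < C) v c * W_WC a b (tnth z.1 c) (tnth z.2 c))%:E)%E.

Definition payoffY (v : 'I_C -> R) (a b : 'I_T -> R)
  (FX FY : probability alloc R) : \bar R := (1 - payoffX v a b FX FY)%E.

Definition equilibrium (v : 'I_C -> R) (a b X Y : 'I_T -> R)
  (FX FY : probability alloc R) : Prop :=
  [/\ admissible X FX, admissible Y FY,
      (forall FX' : probability alloc R, admissible X FX' ->
         (payoffX v a b FX' FY <= payoffX v a b FX FY)%E) &
      (forall FY' : probability alloc R, admissible Y FY' ->
         (payoffX v a b FX FY <= payoffX v a b FX FY')%E)].
End GeneralLotto.

Definition Lpay {R : realType} (alpha : R) : R :=
  if alpha <= 1 then 1 - alpha / 2 else 1 / (2 * alpha).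

From HB Require Import structures.
From mathcomp Require Import all_boot all_order all_algebra.
From mathcomp Require Import all_classical all_reals all_analysis.
From mathcomp Require Import measurable_realfun.
From mathcomp Require Import ring.

Set Implicit Arguments.
Unset Strict Implicit.
Unset Printing Implicit Defensive.

Import Order.TTheory GRing.Theory Num.Theory.
Local Open Scope classical_set_scope.
Local Open Scope ring_scope.

(* A player with budget vector [Z] can play the "lotto" strategy with
   parameter [k >= 1]: draw [u] uniformly in [[1 - k, 1]] and send the
   fraction [2 k v_c max(u, 0)] of every [Z_t] to contest [c].  Its weighted
   contribution there is then zero with probability [1 - 1/k] and otherwise
   uniform on [[0, K_c]], [K_c = 2 k v_c (w . Z)], so it strictly beats any
   threshold [s] with probability at least [(1 - max(s, 0) / K_c) / k].
   Summing over contests, the expected score against a pure allocation is an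
   affine function of the opponent's total positive contribution, whose
   expectation the opponent's budget caps; by Fubini the strategy thus
   guarantees [(1 - rho / (2 k)) / k] against every admissible opponent,
   [rho] being the ratio of the opponent's weighted budget to one's own.
   With [k = max(1, beta)] for X and [k = max(1, 1/beta)] for Y (or any
   strategy for Y when [beta = 0]), the payoff X secures and the cap Y puts
   on it both equal [L(beta)]; a pair of strategies guaranteeing the same
   value from both sides is an equilibrium that pins down the payoff of
   every equilibrium. *)

Section uniform_on_l1.
Variables (R : realType) (l : R) (hl : l < 1).
Local Notation U := (uniform_prob hl).

Lemma uniform_prob_oc1 t : l <= t -> t <= 1 ->
  U `]t, 1] = ((1 - t) / (1 - l))%:E.
Proof.
move=> lt t1; rewrite /uniform_prob integral_uniform_pdf.
have tl1 : `]t, 1] `&` `[l, 1] = `]t, 1]%classic.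
  apply/setIidl => x /=; rewrite !in_itv /= => /andP[tx ->].
  by rewrite (le_trans lt (ltW tx)).
rewrite tl1 (eq_integral (fun=> (1 - l)^-1%:E)); last first.
  move=> x; rewrite inE /= in_itv /= => /andP[tx x1].
  by rewrite /uniform_pdf (le_trans lt (ltW tx)) x1.
rewrite integral_cst //= lebesgue_measure_itv /= lte_fin.
have [->|t_neq1] := eqVneq t 1; first by rewrite ltxx subrr mul0r mule0.
by rewrite lt_neqAle t_neq1 t1 -EFinD -EFinM mulrC.
Qed.

Lemma integral_uniform_max0 : l <= 0 ->
  (\int[U]_u (Num.max u 0)%:E)%E = ((1 - l)^-1 / 2)%:E.
Proof.
move=> l0; rewrite integral_uniform //; last 2 first.
- by apply/measurable_EFinP; exact: measurable_maxr.
- by move=> x; rewrite lee_fin le_max lexx orbT.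
rewrite integral_mkcond.
suff -> : (\int[lebesgue_measure]_x (((fun u => (Num.max u 0)%:E) \_ `[l, 1%R]) x))%E
    = (beta_fun 2 1)%:E by rewrite beta_fun_sym beta_fun1Sn -EFinM.
(* [max u 0] restricted to [l, 1] is the Beta(2, 1) kernel [u] restricted to [0, 1] *)
rewrite EFin_beta_fun; apply: eq_integral => x _.
rewrite !patchE !mem_setE /= !in_itv /= /XMonemX expr1 expr0 mulr1.
case: (boolP (0 <= x)) => x0.
- by rewrite (max_idPl x0) (le_trans l0 x0) /=; case: (x <= 1).
- have x_le0 : x <= 0 by rewrite ltW // ltNge.
  by rewrite (max_idPr x_le0); case: ifP.
Qed.

Lemma uniform_tail_lb (K s : R) : l <= 0 -> 0 < K ->
  (((1 - Num.max s 0 / K) / (1 - l))%:E <=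
   \int[U]_u (if s < K * Num.max u 0 then 1 else 0 : R)%:E)%E.
Proof.
move=> l0 K0; set t := Num.max s 0 / K.
have t0 : 0 <= t by rewrite divr_ge0 ?le_max ?lexx ?orbT // ltW.
have [t1|t1] := leP t 1; last first.
  apply: (@le_trans _ _ 0%E); last by apply: integral_ge0 => x _; case: ifP.
  by rewrite lee_fin pmulr_lle0 ?invr_gt0 ?subr_gt0 // subr_le0 ltW.
rewrite -(uniform_prob_oc1 (le_trans l0 t0) t1) -(setIT `]t, 1]%classic) -integral_indic //.
apply: ge0_le_integral => //.
- by apply/measurable_EFinP; exact: measurable_indic.
- apply/measurable_EFinP; apply: measurable_fun_ifT => //.
  by apply: measurable_fun_ltr => //; apply: measurable_funM => //; exact: measurable_maxr.
move=> u _; rewrite indicE; case: (boolP (u \in _)) => [|_]; last by case: ifP.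
rewrite mem_setE /= in_itv /= => /andP[tu _].
have u0 : 0 <= u by exact: le_trans (ltW tu).
suff -> : s < K * Num.max u 0 by [].
rewrite (max_idPl u0); apply: (@le_lt_trans _ _ (Num.max s 0)); first by rewrite le_max lexx.
by rewrite -ltr_pdivrMl // mulrC.
Qed.

End uniform_on_l1.

Section probability_integral_bounds.
Context d (T : measurableType d) (R : realType) (P : probability T R).

Lemma ge0_integral_wsum n (v : 'I_n -> R) (g : 'I_n -> T -> R) :
  (forall i, 0 <= v i) -> (forall i x, 0 <= g i x) ->
  (forall i, measurable_fun setT (g i)) ->
  (\int[P]_x (\sum_(i < n) v i * g i x)%:E =
   \sum_(i < n) (v i)%:E * \int[P]_x (g i x)%:E)%E.
Proof.
move=> v0 g0 mg; under eq_integral do rewrite -sumEFin.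
rewrite ge0_integral_sum //; last 2 first.
- by move=> i; apply/measurable_EFinP; exact: measurable_funM.
- by move=> i x _; rewrite lee_fin mulr_ge0.
apply: eq_bigr => i _; under eq_integral do rewrite EFinM.
by rewrite ge0_integralZl_EFin //; [move=> x _; rewrite lee_fin | exact/measurable_EFinP].
Qed.

Lemma integral_cst_prob (r : R) : (\int[P]_x r%:E = r%:E)%E.
Proof. by rewrite integral_cst // [X in (_ * X)%E]probability_setT mule1. Qed.

Lemma integral_oneB (f : T -> R) : measurable_fun setT f ->
  (forall x, 0 <= f x <= 1) ->
  (\int[P]_x (1 - f x)%:E = 1 - \int[P]_x (f x)%:E)%E.
Proof.
move=> mf f01.
have int1 : P.-integrable setT (EFin \o cst (1 : R)).
  exact: finite_measure_integrable_cst.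
have intf : P.-integrable setT (EFin \o f).
  apply: le_integrable int1 => //; first exact/measurable_EFinP.
  move=> x _ /=; have /andP[f0 f1] := f01 x.
  by rewrite lee_fin normr1 ger0_norm.
under eq_integral do rewrite EFinB.
by rewrite (integralB_EFin _ int1 intf) //= integral_cst_prob.
Qed.

Section affine_bounds.
Variables (phi : T -> \bar R) (S : T -> R) (c k B : R).
Hypotheses (mphi : measurable_fun setT phi) (phi0 : forall x, (0 <= phi x)%E).
Hypotheses (mS : measurable_fun setT S) (S0 : forall x, 0 <= S x).
Hypotheses (c0 : 0 <= c) (k0 : 0 <= k).
Hypothesis intS : (\int[P]_x (S x)%:E <= B%:E)%E.

Lemma integral_affine_lb : (forall x, (c - k * S x)%:E <= phi x)%E ->
  ((c - k * B)%:E <= \int[P]_x phi x)%E.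
Proof.
move=> phiS.
have mkS : measurable_fun setT (fun x => (k * S x)%:E).
  by apply/measurable_EFinP; exact: measurable_funM.
have : (c%:E <= \int[P]_x (phi x + (k * S x)%:E))%E.
  rewrite -(integral_cst_prob c); apply: ge0_le_integral => //.
    exact: emeasurable_funD.
  by move=> x _; rewrite -leeBlDr // -EFinB phiS.
rewrite ge0_integralD //; last by move=> x _; rewrite lee_fin mulr_ge0.
under [X in (_ + X)%E]eq_integral do rewrite EFinM.
rewrite ge0_integralZl_EFin //; last 2 first.
- by move=> x _; rewrite lee_fin.
- exact/measurable_EFinP.
move=> h; rewrite EFinB leeBlDr // (le_trans h) // leeD2l // EFinM.
by rewrite lee_wpmul2l // lee_fin.
Qed.

Lemma integral_affine_ub : (forall x, phi x <= (c + k * S x)%:E)%E ->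
  (\int[P]_x phi x <= (c + k * B)%:E)%E.
Proof.
move=> phiS.
apply: (@le_trans _ _ (\int[P]_x (c%:E + (k * S x)%:E))%E).
  apply: ge0_le_integral => //.
  by apply: emeasurable_funD => //; apply/measurable_EFinP; exact: measurable_funM.
rewrite ge0_integralD //; try by [move=> x _; rewrite lee_fin ?mulr_ge0 |
  apply/measurable_EFinP; exact: measurable_funM].
under [X in (_ + X)%E]eq_integral do rewrite EFinM.
rewrite integral_cst_prob ge0_integralZl_EFin //; last 2 first.
- by move=> x _; rewrite lee_fin.
- exact/measurable_EFinP.
by rewrite EFinD leeD2l // EFinM lee_wpmul2l // lee_fin.
Qed.

End affine_bounds.
End probability_integral_bounds.

Lemma measurable_wsum_if d (S : measurableType d) (R : realType) n
    (v : 'I_n -> R) (P : 'I_n -> S -> bool) :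
  (forall i, measurable_fun setT (P i)) ->
  measurable_fun setT (fun x => \sum_(i < n) v i * (if P i x then 1 else 0)).
Proof.
move=> mP; apply: measurable_sum => i.
by apply: measurable_funM => //; exact: measurable_fun_ifT.
Qed.

Lemma wsum_if_ge0_le (R : numDomainType) n (v : 'I_n -> R) (P : 'I_n -> bool) :
  (forall i, 0 <= v i) ->
  0 <= \sum_(i < n) v i * (if P i then 1 else 0) <= \sum_(i < n) v i.
Proof.
move=> v0; apply/andP; split.
- by apply: sumr_ge0 => i _; rewrite mulr_ge0 //; case: ifP.
- by apply: ler_sum => i _; case: ifP; rewrite ?mulr1 ?mulr0.
Qed.

Section general_lotto.
Variables (R : realType) (C T : nat).
Local Notation alloc := (alloc R C T).

Definition coord (c : 'I_C) (t : 'I_T) (x : alloc) : R := tnth (tnth x c) t.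

Definition contrib (w : 'I_T -> R) (x : alloc) (c : 'I_C) : R :=
  \sum_(t < T) w t * coord c t x.

Definition scoreX (v : 'I_C -> R) (a b : 'I_T -> R) (x y : alloc) : R :=
  \sum_(c < C) v c * W_WC a b (tnth x c) (tnth y c).

Definition outbid (v : 'I_C -> R) (e : 'I_C -> R) (w : 'I_T -> R) (x : alloc) : R :=
  \sum_(c < C) v c * (if e c < contrib w x c then 1 else 0).

Lemma W_WC_contrib a b (x y : alloc) c :
  W_WC a b (tnth x c) (tnth y c) = if contrib b y c <= contrib a x c then 1 else 0.
Proof. by []. Qed.

Lemma scoreX_outbid v a b x y : \sum_(c < C) v c = 1 ->
  scoreX v a b x y = 1 - outbid v (contrib a x) b y.
Proof.
move=> sv; rewrite /scoreX /outbid -[X in X - _]sv -sumrB; apply: eq_bigr => c _.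
by rewrite W_WC_contrib ltNge; case: ifP; rewrite ?mulr1 ?mulr0 ?subrr ?subr0.
Qed.

Lemma outbid_le_scoreX v a b x y : (forall c, 0 <= v c) ->
  outbid v (contrib b y) a x <= scoreX v a b x y.
Proof.
move=> v0; apply: ler_sum => c _; rewrite W_WC_contrib ler_wpM2l //.
by case: ltP => [/ltW ->|] //; case: ifP.
Qed.

Lemma scoreX_ge0 v a b x y : (forall c, 0 <= v c) -> 0 <= scoreX v a b x y.
Proof.
by move=> v0; have /andP[] := wsum_if_ge0_le (fun c => contrib b y c <= contrib a x c) v0.
Qed.

Lemma outbid_ge0 v e w x : (forall c, 0 <= v c) -> 0 <= outbid v e w x.
Proof. by move=> v0; have /andP[] := wsum_if_ge0_le (fun c => e c < contrib w x c) v0. Qed.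

Lemma measurable_coord c t : measurable_fun setT (coord c t).
Proof. exact: measurableT_comp (measurable_tnth t) (measurable_tnth c). Qed.

Lemma measurable_contrib w c : measurable_fun setT (fun x => contrib w x c).
Proof.
apply: measurable_sum => t.
by apply: measurable_funM => //; exact: measurable_coord.
Qed.

Lemma measurable_scoreX v a b :
  measurable_fun setT (fun z : alloc * alloc => scoreX v a b z.1 z.2).
Proof.
apply: measurable_wsum_if => c; apply: measurable_fun_ler.
- exact: measurableT_comp (measurable_contrib b c) measurable_snd.
- exact: measurableT_comp (measurable_contrib a c) measurable_fst.
Qed.

Lemma measurable_scoreX1 v a b y : measurable_fun setT (scoreX v a b ^~ y).
Proof.
by apply: measurable_wsum_if => c; apply: measurable_fun_ler => //; exact: measurable_contrib.
Qed.

Lemma measurable_outbid v e w : measurable_fun setT (outbid v e w).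
Proof.
by apply: measurable_wsum_if => c; apply: measurable_fun_ltr => //; exact: measurable_contrib.
Qed.

Section payoff_bounds.
Variables (v : 'I_C -> R) (a b : 'I_T -> R).
Hypotheses (v0 : forall c, 0 <= v c) (sv : \sum_(c < C) v c = 1).
Variables (F G : probability alloc R) (S : alloc -> R) (p k B : R).
Hypotheses (mS : measurable_fun setT S) (S0 : forall x, 0 <= S x) (k0 : 0 <= k).

Let mscore : measurable_fun setT (fun z : alloc * alloc => (scoreX v a b z.1 z.2)%:E).
Proof. by apply/measurable_EFinP; exact: measurable_scoreX. Qed.

Let score0 z : (0 <= (scoreX v a b z.1 z.2)%:E)%E.
Proof. by rewrite lee_fin scoreX_ge0. Qed.

Lemma payoffX_lb : 0 <= p ->
  (forall y, ((p - k * S y)%:E <= \int[F]_x (scoreX v a b x y)%:E)%E) ->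
  (\int[G]_y (S y)%:E <= B%:E)%E ->
  ((p - k * B)%:E <= payoffX v a b F G)%E.
Proof.
move=> p0 hS hB.
have -> : payoffX v a b F G = (\int[G]_y fubini_G F (fun z => (scoreX v a b z.1 z.2)%:E) y)%E.
  exact: fubini_tonelli2 _ mscore score0.
apply: integral_affine_lb => //.
- exact: measurable_fun_fubini_tonelli_G.
- by move=> y; apply: integral_ge0 => x _; exact: score0.
exact: mS.
Qed.

Lemma payoffX_ub : p <= 1 ->
  (forall x, ((p - k * S x)%:E <= \int[G]_y (outbid v (contrib a x) b y)%:E)%E) ->
  (\int[F]_x (S x)%:E <= B%:E)%E ->
  (payoffX v a b F G <= (1 - p + k * B)%:E)%E.
Proof.
move=> p1 hS hB.
have -> : payoffX v a b F G = (\int[F]_x fubini_F G (fun z => (scoreX v a b z.1 z.2)%:E) x)%E.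
  exact: fubini_tonelli1 _ mscore score0.
apply: integral_affine_ub => //.
- exact: measurable_fun_fubini_tonelli_F.
- by move=> x; apply: integral_ge0 => y _; exact: score0.
- exact: mS.
- by rewrite subr_ge0.
move=> x; rewrite /fubini_F /=.
under eq_integral do rewrite scoreX_outbid //.
rewrite integral_oneB; last 2 first.
- exact: measurable_outbid.
- by move=> y; rewrite -sv wsum_if_ge0_le.
have -> : 1 - p + k * S x = 1 - (p - k * S x) by ring.
by rewrite EFinB; apply: leeB.
Qed.

End payoff_bounds.

Lemma payoffX_le1 v a b (F G : probability alloc R) :
  (forall c, 0 <= v c) -> \sum_(c < C) v c = 1 -> (payoffX v a b F G <= 1%:E)%E.
Proof.
move=> v0 sv.
have := payoffX_ub (S := fun=> 0) (p := 0) (k := 0) (B := 0) (F := F) (G := G) v0 sv.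
rewrite subr0 mul0r addr0; apply=> //.
- by move=> x; rewrite subr0; apply: integral_ge0 => y _; rewrite lee_fin outbid_ge0.
- by rewrite integral_cst_prob.
Qed.

Definition orthant : set alloc := [set x | forall c t, 0 <= coord c t x].

Lemma measurable_orthant : measurable orthant.
Proof.
have -> : orthant = \bigcap_(c in [set: 'I_C]) \bigcap_(t in [set: 'I_T])
    (coord c t @^-1` `[0, +oo[%classic).
  apply/seteqP; split => x /=.
  - by move=> x0 c _ t _ /=; rewrite in_itv /= andbT; exact: x0.
  - by move=> x0 c t; have := x0 c I t I; rewrite /= in_itv /= andbT.
apply: fin_bigcap_measurable; first exact: finite_finset.
move=> c _; apply: fin_bigcap_measurable; first exact: finite_finset.
by move=> t _; rewrite -[X in measurable X]setTI; exact: measurable_coord.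
Qed.

Lemma measurable_sum_coord_max0 t :
  measurable_fun setT (fun x => \sum_(c < C) Num.max (coord c t x) 0).
Proof.
apply: measurable_sum => c.
by apply: measurable_maxr => //; exact: measurable_coord.
Qed.

Lemma integral_sum_coord (P : probability alloc R) t : P orthant = 1%E ->
  (\int[P]_x (\sum_(c < C) coord c t x)%:E =
   \int[P]_x (\sum_(c < C) Num.max (coord c t x) 0)%:E)%E.
Proof.
move=> PO; apply: ae_eq_integral => //.
- by apply/measurable_EFinP; apply: measurable_sum => c; exact: measurable_coord.
- by apply/measurable_EFinP; exact: measurable_sum_coord_max0.
exists (~` orthant); split.
- exact: measurableC measurable_orthant.
- by have := probability_setC P measurable_orthant; rewrite PO subee.
move=> x /= nfx; apply: contra_not nfx => x0 _; congr EFin.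
by apply: eq_bigr => c _; rewrite (max_idPl (x0 c t)).
Qed.

Definition pos_contrib (w : 'I_T -> R) (x : alloc) : R :=
  \sum_(c < C) Num.max (contrib w x c) 0.

Lemma pos_contrib_ge0 w x : 0 <= pos_contrib w x.
Proof. by apply: sumr_ge0 => c _; rewrite le_max lexx orbT. Qed.

Lemma measurable_pos_contrib w : measurable_fun setT (pos_contrib w).
Proof.
apply: measurable_sum => c.
by apply: measurable_maxr => //; exact: measurable_contrib.
Qed.

Lemma admissible_pos_contrib (G : probability alloc R) (w Zb : 'I_T -> R) :
  (forall t, 0 <= w t) -> admissible Zb G ->
  (\int[G]_y (pos_contrib w y)%:E <= (\sum_(t < T) w t * Zb t)%:E)%E.
Proof.
move=> w0 [GO GB].
apply: (@le_trans _ _ (\int[G]_y (\sum_(t < T) w t *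
    \sum_(c < C) Num.max (coord c t y) 0)%:E)%E).
  apply: ge0_le_integral => //.
  - by move=> y _; rewrite lee_fin pos_contrib_ge0.
  - by apply/measurable_EFinP; exact: measurable_pos_contrib.
  - apply/measurable_EFinP; apply: measurable_sum => t.
    by apply: measurable_funM => //; exact: measurable_sum_coord_max0.
  move=> y _; rewrite lee_fin; under [leRHS]eq_bigr do rewrite mulr_sumr.
  rewrite exchange_big /=; apply: ler_sum => c _; rewrite ge_max; apply/andP; split.
  - by apply: ler_sum => t _; rewrite ler_wpM2l // le_max lexx.
  - by apply: sumr_ge0 => t _; rewrite mulr_ge0 // le_max lexx orbT.
rewrite ge0_integral_wsum //; last 2 first.
- by move=> t y; apply: sumr_ge0 => c _; rewrite le_max lexx orbT.
- exact: measurable_sum_coord_max0.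
rewrite -sumEFin; apply: lee_sum => t _; rewrite EFinM lee_wpmul2l ?lee_fin //.
by rewrite -integral_sum_coord //; exact: GB.
Qed.

Lemma ge1_subr_lt1 (k : R) : 1 <= k -> 1 - k < 1.
Proof. by move=> k1; rewrite ltrBlDr ltrDl (lt_le_trans ltr01 k1). Qed.

Definition lotto_alloc (Z : 'I_T -> R) (v : 'I_C -> R) (k u : R) : alloc :=
  [tuple [tuple 2 * k * v c * Num.max u 0 * Z t | t < T] | c < C].

Lemma coord_lotto_alloc Z v k u c t :
  coord c t (lotto_alloc Z v k u) = 2 * k * v c * Num.max u 0 * Z t.
Proof. by rewrite /coord !tnth_mktuple. Qed.

Lemma contrib_lotto_alloc w Z v k u c :
  contrib w (lotto_alloc Z v k u) c =
  2 * k * v c * Num.max u 0 * \sum_(t < T) w t * Z t.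
Proof.
rewrite /contrib mulr_sumr; apply: eq_bigr => t _.
by rewrite coord_lotto_alloc mulrCA.
Qed.

Lemma measurable_lotto_alloc Z v k :
  measurable_fun (setT : set (measurableTypeR R)) (lotto_alloc Z v k).
Proof.
apply/measurable_fun_tnthP => c; apply/measurable_fun_tnthP => t.
rewrite /comp /=; under eq_fun do rewrite !tnth_mktuple.
by apply: measurable_funM => //; apply: measurable_funM => //; exact: measurable_maxr.
Qed.

Definition lotto_mfun Z v k : {mfun measurableTypeR R >-> alloc} :=
  HB.pack (lotto_alloc Z v k)
    (isMeasurableFun.Build _ _ _ _ _ (measurable_lotto_alloc Z v k)).

Definition lotto Z v k (k1 : 1 <= k) : probability alloc R :=
  distribution (uniform_prob (ge1_subr_lt1 k1)) (lotto_mfun Z v k).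

Section lotto_strategy.
Variables (Z : 'I_T -> R) (v : 'I_C -> R) (k : R) (k1 : 1 <= k).
Hypotheses (v_gt0 : forall c, 0 < v c) (sv : \sum_(c < C) v c = 1).
Local Notation U := (uniform_prob (ge1_subr_lt1 k1)).

Let k0 : 0 < k. Proof. exact: lt_le_trans ltr01 k1. Qed.
Let v0 c : 0 <= v c. Proof. exact: ltW. Qed.
Let max0 (r : R) : 0 <= Num.max r 0. Proof. by rewrite le_max lexx orbT. Qed.

Lemma integral_lotto (f : alloc -> \bar R) :
  measurable_fun setT f -> (forall x, (0 <= f x)%E) ->
  (\int[lotto Z v k1]_x f x = \int[U]_u f (lotto_alloc Z v k u))%E.
Proof. by move=> mf f0; rewrite ge0_integral_distribution. Qed.

Lemma lotto_orthant : (forall t, 0 <= Z t) -> lotto Z v k1 orthant = 1%E.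
Proof.
move=> Z0; rewrite /lotto /distribution /pushforward /=.
suff -> : lotto_mfun Z v k @^-1` orthant = setT by exact: probability_setT.
apply/seteqP; split => u //= _ c t.
by rewrite coord_lotto_alloc !mulr_ge0 // ltW.
Qed.

Lemma lotto_budget t : (forall t, 0 <= Z t) ->
  (\int[lotto Z v k1]_x (\sum_(c < C) coord c t x)%:E = (Z t)%:E)%E.
Proof.
move=> Z0; rewrite integral_sum_coord ?lotto_orthant // integral_lotto; last 2 first.
- by apply/measurable_EFinP; exact: measurable_sum_coord_max0.
- by move=> x; rewrite lee_fin sumr_ge0.
under eq_integral => u _.
  rewrite (eq_bigr (fun c => v c * (2 * k * Z t * Num.max u 0))); last first.
    move=> c _; rewrite coord_lotto_alloc (max_idPl _) ?mulr_ge0 ?(ltW k0) //.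
    by ring.
  rewrite -mulr_suml sv mul1r EFinM.
  over.
rewrite ge0_integralZl_EFin ?mulr_ge0 ?(ltW k0) //; last 2 first.
- by move=> u _; rewrite lee_fin.
- by apply/measurable_EFinP; exact: measurable_maxr.
rewrite integral_uniform_max0 ?subr_le0 // -EFinM opprB addrC subrK.
by congr EFin; field; rewrite gt_eqF.
Qed.

Lemma lotto_admissible : (forall t, 0 <= Z t) -> admissible Z (lotto Z v k1).
Proof. by move=> Z0; split=> [|t]; rewrite ?lotto_orthant ?lotto_budget. Qed.

Lemma lotto_outbid (w : 'I_T -> R) (e : 'I_C -> R) :
  0 < \sum_(t < T) w t * Z t ->
  (((1 - (\sum_(c < C) Num.max (e c) 0) / (\sum_(t < T) w t * Z t) / (2 * k)) / k)%:E
   <= \int[lotto Z v k1]_x (outbid v e w x)%:E)%E.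
Proof.
set P := \sum_(t < T) w t * Z t => P0.
rewrite integral_lotto; last 2 first.
- by apply/measurable_EFinP; exact: measurable_outbid.
- by move=> x; rewrite lee_fin outbid_ge0.
under eq_integral => u _.
  rewrite /outbid; under eq_bigr => c _ do rewrite contrib_lotto_alloc -/P.
  over.
rewrite ge0_integral_wsum //; last 2 first.
- by move=> c u; case: ifP.
- move=> c; apply: measurable_fun_ifT => //; apply: measurable_fun_ltr => //.
  by apply: measurable_funM => //; apply: measurable_funM => //; exact: measurable_maxr.
apply: (@le_trans _ _ (\sum_(c < C) (v c)%:E *
    ((1 - Num.max (e c) 0 / (2 * k * v c * P)) / (1 - (1 - k)))%:E)%E); last first.
  apply: lee_sum => c _; rewrite lee_wpmul2l ?lee_fin //.
  under eq_integral do rewrite mulrAC.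
  apply: uniform_tail_lb; first by rewrite subr_le0.
  by rewrite !mulr_gt0.
rewrite sumEFin lee_fin [leRHS](eq_bigr (fun c => (v c - Num.max (e c) 0 / P / (2 * k)) / k));
  last by move=> c _; field; rewrite !gt_eqF.
by rewrite -mulr_suml sumrB sv -!mulr_suml.
Qed.

End lotto_strategy.

Section lotto_guarantees.
Variables (v : 'I_C -> R) (a b : 'I_T -> R) (Z : 'I_T -> R) (k : R) (k1 : 1 <= k).
Hypotheses (v_gt0 : forall c, 0 < v c) (sv : \sum_(c < C) v c = 1).

Let k0 : 0 < k. Proof. exact: lt_le_trans ltr01 k1. Qed.
Let v0 c : 0 <= v c. Proof. exact: ltW. Qed.

Lemma lotto_payoffX_lb Yb (G : probability alloc R) :
  (forall t, 0 <= b t) -> 0 < \sum_(t < T) a t * Z t -> admissible Yb G ->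
  (((1 - (\sum_(t < T) b t * Yb t) / (\sum_(t < T) a t * Z t) / (2 * k)) / k)%:E
   <= payoffX v a b (lotto Z v k1) G)%E.
Proof.
set P := \sum_(t < T) a t * Z t => b0 P0 aG.
have affine r : (1 - r / P / (2 * k)) / k = k^-1 - (P * (2 * k) * k)^-1 * r.
  by field; rewrite !gt_eqF.
rewrite affine; apply: (payoffX_lb v0 (S := pos_contrib b)) => //.
- exact: measurable_pos_contrib.
- exact: pos_contrib_ge0.
- by rewrite invr_ge0 !mulr_ge0 // ltW.
- by rewrite invr_ge0 ltW.
- move=> y; rewrite -affine; apply: le_trans (lotto_outbid k1 v_gt0 sv (contrib b y) P0) _.
  apply: ge0_le_integral => //.
  + by move=> x _; rewrite lee_fin outbid_ge0.
  + by apply/measurable_EFinP; exact: measurable_outbid.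
  + by apply/measurable_EFinP; exact: measurable_scoreX1.
  + by move=> x _; rewrite lee_fin outbid_le_scoreX.
- exact: admissible_pos_contrib.
Qed.

Lemma lotto_payoffX_ub Xb (F : probability alloc R) :
  (forall t, 0 <= a t) -> 0 < \sum_(t < T) b t * Z t -> admissible Xb F ->
  (payoffX v a b F (lotto Z v k1) <=
   (1 - (1 - (\sum_(t < T) a t * Xb t) / (\sum_(t < T) b t * Z t) / (2 * k)) / k)%:E)%E.
Proof.
set P := \sum_(t < T) b t * Z t => a0 P0 aF.
have affine r : (1 - r / P / (2 * k)) / k = k^-1 - (P * (2 * k) * k)^-1 * r.
  by field; rewrite !gt_eqF.
have -> : 1 - (1 - (\sum_(t < T) a t * Xb t) / P / (2 * k)) / k =
    1 - k^-1 + (P * (2 * k) * k)^-1 * \sum_(t < T) a t * Xb t by rewrite affine; ring.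
apply: (payoffX_ub v0 sv (S := pos_contrib a)) => //.
- exact: measurable_pos_contrib.
- exact: pos_contrib_ge0.
- by rewrite invr_ge0 !mulr_ge0 // ltW.
- by rewrite invf_le1.
- by move=> x; rewrite -affine; exact: (lotto_outbid k1 v_gt0 sv (contrib a x)).
- exact: admissible_pos_contrib.
Qed.

End lotto_guarantees.

Lemma equilibrium_value v a b Xb Yb (L : R) (FX FY : probability alloc R) :
  admissible Xb FX -> admissible Yb FY ->
  (forall G, admissible Yb G -> (L%:E <= payoffX v a b FX G)%E) ->
  (forall F, admissible Xb F -> (payoffX v a b F FY <= L%:E)%E) ->
  (exists FX FY : probability alloc R, equilibrium v a b Xb Yb FX FY) /\
  (forall FX FY : probability alloc R, equilibrium v a b Xb Yb FX FY ->
     payoffX v a b FX FY = L%:E /\ payoffY v a b FX FY = (1 - L)%:E).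
Proof.
move=> aX aY hX hY.
have eqL : payoffX v a b FX FY = L%:E by apply/le_anti; rewrite hY // hX.
split.
- by exists FX, FY; split => // [F|G] ? ; rewrite eqL; [exact: hY|exact: hX].
- move=> F G [aF aG hF hG].
  have e : payoffX v a b F G = L%:E.
    apply/le_anti/andP; split.
    + exact: le_trans (hG FY aY) (hY F aF).
    + exact: le_trans (hX G aG) (hF FX aX).
  by split => //; rewrite /payoffY e EFinB.
Qed.

End general_lotto.

Lemma Lpay_max1 (R : realType) (beta : R) :
  (1 - beta / (2 * Num.max 1 beta)) / Num.max 1 beta = Lpay beta.
Proof.
rewrite /Lpay; have [b1|b1] := leP beta 1.
- by rewrite mulr1 divr1.
- by field; rewrite gt_eqF // (lt_trans ltr01 b1).
Qed.

Lemma Lpay_max1V (R : realType) (r : R) : 0 < r ->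
  1 - (1 - r / (2 * Num.max 1 r)) / Num.max 1 r = Lpay r^-1.
Proof.
move=> r0; rewrite /Lpay invf_le1 //; case: ltgtP => [r1|r1|<-].
- by field; rewrite gt_eqF.
- by field; rewrite gt_eqF.
- by field.
Qed.

Theorem proposition1 (R : realType) (C T : nat)
  (v : 'I_C -> R) (a b X Y : 'I_T -> R) :
  (forall c, 0 < v c) -> \sum_(c < C) v c = 1 ->
  (forall t, 0 <= a t) -> (forall t, 0 <= b t) ->
  (forall t, 0 <= X t) -> (forall t, 0 <= Y t) ->
  0 < \sum_(t < T) a t * X t ->
  let beta := (\sum_(t < T) b t * Y t) / (\sum_(t < T) a t * X t) in
  (exists FX FY : probability (alloc R C T) R, equilibrium v a b X Y FX FY) /\
  (forall FX FY : probability (alloc R C T) R, equilibrium v a b X Y FX FY ->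
     payoffX v a b FX FY = (Lpay beta)%:E /\
     payoffY v a b FX FY = (1 - Lpay beta)%:E).
Proof.
move=> v_gt0 sv a0 b0 X0 Y0 AX_gt0 beta.
have v0 c : 0 <= v c by exact: ltW.
have max1_ge1 (r : R) : 1 <= Num.max 1 r by rewrite le_max lexx.
have [FY [aY hY]] : exists FY, admissible Y FY /\ forall F, admissible X F ->
    (payoffX v a b F FY <= (Lpay beta)%:E)%E.
  have [BY_eq0|BY_neq0] := eqVneq (\sum_(t < T) b t * Y t) 0.
    exists (lotto Y v (lexx 1)); split; first exact: lotto_admissible.
    by move=> F _; rewrite /beta BY_eq0 mul0r /Lpay ler01 mul0r subr0 payoffX_le1.
  have BY_gt0 : 0 < \sum_(t < T) b t * Y t.
    by rewrite lt_def BY_neq0 sumr_ge0 // => t _; rewrite mulr_ge0.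
  exists (lotto Y v (max1_ge1 ((\sum_(t < T) a t * X t) / \sum_(t < T) b t * Y t))).
  split; first exact: lotto_admissible.
  move=> F aF; rewrite /beta -[X in Lpay X]invf_div -Lpay_max1V ?divr_gt0 //.
  exact: lotto_payoffX_ub.
apply: (equilibrium_value (lotto_admissible (max1_ge1 beta) v_gt0 sv X0) aY _ hY).
by move=> G aG; rewrite -Lpay_max1; exact: lotto_payoffX_lb.
Qed.
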